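(* Let $(T,\mu,\eta)$ be a monad on a category $\mathcal C$, $(T',\mu',\eta')$ a monad on a category $\mathcal C'$, and $(G\colon\mathcal C\to\mathcal C',V\colon\mathcal C'\to\mathcal C)$ an adjunction with unit $h\colon 1_{\mathcal C}\to VG$ and counit $e\colon GV\to 1_{\mathcal C'}$. Let $\zeta\colon T'G\to GT$ be a natural transformation with $\zeta\mu'_G=G(\mu)\zeta_TT'(\zeta)$ and $\zeta\eta'_G=G(\eta)$. Then the following are equivalent: (i) there is a natural transformation $\xi\colon TV\to VT'$ such that $\xi\mu_V=V(\mu')\xi_{T'}T(\xi)$, $\xi\eta_V=V(\eta')$, $T'(e)=e_{T'}G(\xi)\zeta_V$ and $h_T=V(\zeta)\xi_GT(h)$; (ii) $\zeta$ is invertible. In that case $\xi$ is unique and equals $VT'(e)\,V(\zeta^{-1}_V)\,h_{TV}$.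
   Context: Such a pair $(\zeta,\xi)$ corresponds to a lift of the adjunction $(G,V)$ to an adjunction between the categories of modules $\mathcal C^T$ and $\mathcal C'^{T'}$; $\zeta$ alone corresponds to a lift of $G$, via $(M,r)\mapsto(GM,G(r)\zeta_M)$. *)

(* Morphism equality is
   Leibniz equality; composition is written right-to-left (g ∘ f = "g after f"). *)

Set Implicit Arguments.
Set Universe Polymorphism.

Record Category := {
  Ob :> Type;
  Hom : Ob -> Ob -> Type;
  comp : forall a b c : Ob, Hom b c -> Hom a b -> Hom a c;
  idm : forall a : Ob, Hom a a;
  comp_assoc : forall (a b c d : Ob) (f : Hom a b) (g : Hom b c) (k : Hom c d),
      comp k (comp g f) = comp (comp k g) f;
  comp_idl : forall (a b : Ob) (f : Hom a b), comp (idm b) f = f;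
  comp_idr : forall (a b : Ob) (f : Hom a b), comp f (idm a) = f
}.
Arguments Hom {_} _ _.
Arguments comp {_ _ _ _} _ _.
Arguments idm {_} _.

Notation "g ∘ f" := (comp g f) (at level 40, left associativity).

Record Functor (C D : Category) := {
  fobj :> C -> D;
  fmap : forall a b : C, Hom a b -> Hom (fobj a) (fobj b);
  fmap_id : forall a : C, fmap a a (idm a) = idm (fobj a);
  fmap_comp : forall (a b c : C) (f : Hom a b) (g : Hom b c),
      fmap a c (g ∘ f) = fmap b c g ∘ fmap a b f
}.
Arguments fmap {_ _} _ {_ _} _.

Definition Fid (C : Category) : Functor C C.
Proof.
  refine {| fobj := fun a => a; fmap := fun a b f => f |}; reflexivity.
Defined.

Definition Fcomp (C D E : Category) (F : Functor D E) (G : Functor C D)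
  : Functor C E.
Proof.
  refine {| fobj := fun a => F (G a);
            fmap := fun a b f => fmap F (fmap G f) |}.
  - intros a. rewrite !fmap_id. reflexivity.
  - intros a b c f g. rewrite !fmap_comp. reflexivity.
Defined.

Record NatTrans (C D : Category) (F G : Functor C D) := {
  comp_at :> forall a : C, Hom (F a) (G a);
  naturality : forall (a b : C) (f : Hom a b),
      comp_at b ∘ fmap F f = fmap G f ∘ comp_at a
}.

Definition is_inverse_nt (C D : Category) (F G : Functor C D)
  (alpha : NatTrans F G) (beta : NatTrans G F) : Prop :=
  (forall a : C, beta a ∘ alpha a = idm (F a)) /\
  (forall a : C, alpha a ∘ beta a = idm (G a)).

Definition invertible_nt (C D : Category) (F G : Functor C D)
  (alpha : NatTrans F G) : Prop :=
  exists beta : NatTrans G F, is_inverse_nt alpha beta.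

Record Monad (C : Category) := {
  mT :> Functor C C;
  mmu : NatTrans (Fcomp mT mT) mT;
  meta : NatTrans (Fid C) mT;
  monad_assoc : forall a : C,
      mmu a ∘ fmap mT (mmu a) = mmu a ∘ mmu (mT a);
  monad_unitl : forall a : C, mmu a ∘ meta (mT a) = idm (mT a);
  monad_unitr : forall a : C, mmu a ∘ fmap mT (meta a) = idm (mT a)
}.

Record Adjunction (C C' : Category) (G : Functor C C') (V : Functor C' C) := {
  adj_unit : NatTrans (Fid C) (Fcomp V G);
  adj_counit : NatTrans (Fcomp G V) (Fid C');
  adj_triangle1 : forall a : C,
      adj_counit (G a) ∘ fmap G (adj_unit a) = idm (G a);
  adj_triangle2 : forall b : C',
      fmap V (adj_counit b) ∘ adj_unit (V b) = idm (V b)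
}.


(* The adjunction identifies [x : a -> V b] with its transpose
   [e b ∘ G x : G a -> b].  Given ξ, its two compatibilities with e and h say
   exactly that [e ∘ G (ξ_G ∘ T h)] is a two-sided inverse of ζ.  Conversely,
   given ζ⁻¹, the compatibility with e forces the transpose of ξ_b to be
   [T'(e_b) ∘ ζ⁻¹_{V b}], which proves uniqueness; taking this mate of ζ⁻¹ as
   the definition of ξ, every required identity is checked after transposing,
   using that ζ⁻¹ is again compatible with the monad structures. *)

Set Implicit Arguments.

Lemma comp_rewrite2 {C : Category} {a b c d : C}
  {g : Hom c d} {f : Hom b c} {k : Hom b d} :
  g ∘ f = k -> forall x : Hom a b, g ∘ (f ∘ x) = k ∘ x.
Proof. intros H x. rewrite comp_assoc, H. reflexivity. Qed.

Lemma comp_rewrite3 {C : Category} {a b c d z : C}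
  {g : Hom c d} {f : Hom b c} {q : Hom z b} {k : Hom z d} :
  g ∘ (f ∘ q) = k -> forall x : Hom a z, g ∘ (f ∘ (q ∘ x)) = k ∘ x.
Proof. intros H x. rewrite (comp_assoc _ _ _ _ _ x q f), comp_assoc, H. reflexivity. Qed.

Lemma comp_fmap {C D : Category} (F : Functor C D) {a b c : C}
  {f : Hom a b} {g : Hom b c} : fmap F g ∘ fmap F f = fmap F (g ∘ f).
Proof. symmetry. apply fmap_comp. Qed.

Lemma fmap_comp_eq {C D : Category} (F : Functor C D) {a b b' c : C}
  {g : Hom b c} {f : Hom a b} {k : Hom b' c} {l : Hom a b'} :
  g ∘ f = k ∘ l -> fmap F g ∘ fmap F f = fmap F k ∘ fmap F l.
Proof. intros H. rewrite <- !fmap_comp, H. reflexivity. Qed.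

Ltac assoc_r := cbn; repeat rewrite <- comp_assoc.

Ltac rewrite_eq E :=
  first [ rewrite E | rewrite (comp_rewrite2 E) | rewrite (comp_rewrite3 E) ].

Tactic Notation "rewrite_open" uconstr(H) :=
  let E := fresh in
  epose proof H as E; cbn in E; repeat rewrite <- comp_assoc in E;
  rewrite_eq E; clear E.

(* Rewrite with an equation between composites anywhere in a chain of
   compositions: both are normalised to right-nested form first. *)
Tactic Notation "arewrite" uconstr(H) :=
  assoc_r;
  first [ rewrite_open H | rewrite_open (H _) | rewrite_open (H _ _)
        | rewrite_open (H _ _ _) ];
  assoc_r.
Tactic Notation "arewrite" "<-" uconstr(H) :=
  assoc_r;
  first [ rewrite_open (eq_sym H) | rewrite_open (eq_sym (H _))
        | rewrite_open (eq_sym (H _ _)) | rewrite_open (eq_sym (H _ _ _)) ];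
  assoc_r.

Section Transpose.
Variables (C C' : Category) (G : Functor C C') (V : Functor C' C).
Variable adj : Adjunction G V.
Local Notation h := (adj_unit adj).
Local Notation e := (adj_counit adj).

Lemma unit_natural (a a' : C) (f : Hom a a') : h a' ∘ f = fmap V (fmap G f) ∘ h a.
Proof. exact (naturality h a a' f). Qed.

Lemma counit_natural (b b' : C') (f : Hom b b') : e b' ∘ fmap G (fmap V f) = f ∘ e b.
Proof. exact (naturality e b b' f). Qed.

Definition transpose {a : C} {b : C'} (f : Hom (G a) b) : Hom a (V b) :=
  fmap V f ∘ h a.

Lemma counit_transpose (a : C) (b : C') (f : Hom (G a) b) :
  e b ∘ fmap G (transpose f) = f.
Proof.
  unfold transpose. rewrite fmap_comp. arewrite counit_natural.
  arewrite (adj_triangle1 adj). apply comp_idr.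
Qed.

Lemma transpose_counit (a : C) (b : C') (x : Hom a (V b)) :
  transpose (e b ∘ fmap G x) = x.
Proof.
  unfold transpose. rewrite fmap_comp. arewrite <- unit_natural.
  arewrite (adj_triangle2 adj). apply comp_idl.
Qed.

Lemma transpose_unique (a : C) (b : C') (x : Hom a (V b)) (f : Hom (G a) b) :
  e b ∘ fmap G x = f -> x = transpose f.
Proof. intros <-. symmetry. apply transpose_counit. Qed.

Lemma counit_comp_inj (a : C) (b : C') (x y : Hom a (V b)) :
  e b ∘ fmap G x = e b ∘ fmap G y -> x = y.
Proof. intros Hxy. apply transpose_unique in Hxy. rewrite Hxy. apply transpose_counit. Qed.

End Transpose.

Section Inverse.
Variables (C D : Category) (F F' : Functor C D) (al : NatTrans F F').

Lemma inverse_natural (be : forall a : C, Hom (F' a) (F a))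
  (be_al : forall a, be a ∘ al a = idm (F a))
  (al_be : forall a, al a ∘ be a = idm (F' a))
  (a b : C) (f : Hom a b) : be b ∘ fmap F' f = fmap F f ∘ be a.
Proof.
  rewrite <- (comp_idr _ _ _ (be b ∘ fmap F' f)), <- (al_be a).
  arewrite <- (naturality al). arewrite be_al. apply comp_idl.
Qed.

Lemma invertible_nt_intro (be : forall a : C, Hom (F' a) (F a)) :
  (forall a, be a ∘ al a = idm (F a)) -> (forall a, al a ∘ be a = idm (F' a)) ->
  invertible_nt al.
Proof.
  intros be_al al_be.
  exists (Build_NatTrans F' F be (inverse_natural be be_al al_be)).
  split; assumption.
Qed.

Lemma inverse_comp_eq (be : NatTrans F' F) (Hinv : is_inverse_nt al be)
  {a : C} {c : D} {f : Hom c (F a)} {g : Hom c (F' a)} :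
  al a ∘ f = g -> be a ∘ g = f.
Proof. destruct Hinv as [be_al _]. intros <-. arewrite be_al. apply comp_idl. Qed.

End Inverse.

Section Lifting.
Variables (C C' : Category) (T : Monad C) (T' : Monad C').
Variables (G : Functor C C') (V : Functor C' C) (adj : Adjunction G V).
Variable zeta : NatTrans (Fcomp T' G) (Fcomp G T).
Local Notation h := (adj_unit adj).
Local Notation e := (adj_counit adj).

Definition lifting_pair (xi : NatTrans (Fcomp T V) (Fcomp V T')) : Prop :=
  (forall b : C', xi b ∘ mmu T (V b)
                  = fmap V (mmu T' b) ∘ xi (T' b) ∘ fmap T (xi b)) /\
  (forall b : C', xi b ∘ meta T (V b) = fmap V (meta T' b)) /\
  (forall b : C', fmap T' (e b) = e (T' b) ∘ fmap G (xi b) ∘ zeta (V b)) /\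
  (forall a : C, h (T a) = fmap V (zeta a) ∘ xi (G a) ∘ fmap T (h a)).

Lemma zeta_natural (a a' : C) (f : Hom a a') :
  zeta a' ∘ fmap T' (fmap G f) = fmap G (fmap T f) ∘ zeta a.
Proof. exact (naturality zeta a a' f). Qed.

Section Invertible.
Variable xi : NatTrans (Fcomp T V) (Fcomp V T').
Hypothesis xi_counit :
  forall b : C', fmap T' (e b) = e (T' b) ∘ fmap G (xi b) ∘ zeta (V b).
Hypothesis xi_unit :
  forall a : C, h (T a) = fmap V (zeta a) ∘ xi (G a) ∘ fmap T (h a).

Definition lifting_inverse (a : C) : Hom (G (T a)) (T' (G a)) :=
  e (T' (G a)) ∘ fmap G (xi (G a) ∘ fmap T (h a)).

Lemma lifting_inverse_left (a : C) : lifting_inverse a ∘ zeta a = idm (T' (G a)).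
Proof.
  unfold lifting_inverse. rewrite fmap_comp.
  arewrite <- zeta_natural. arewrite <- xi_counit.
  rewrite <- fmap_comp. arewrite (adj_triangle1 adj). apply fmap_id.
Qed.

Lemma lifting_inverse_right (a : C) : zeta a ∘ lifting_inverse a = idm (G (T a)).
Proof.
  unfold lifting_inverse. arewrite <- (counit_natural adj).
  rewrite <- fmap_comp. arewrite <- xi_unit. apply (adj_triangle1 adj).
Qed.

Lemma invertible_of_lifting : invertible_nt zeta.
Proof.
  exact (invertible_nt_intro zeta lifting_inverse
           lifting_inverse_left lifting_inverse_right).
Qed.

End Invertible.

Section Mate.
Variable zinv : NatTrans (Fcomp G T) (Fcomp T' G).
Hypothesis zinv_inverse : is_inverse_nt zeta zinv.

Lemma zinv_natural (a a' : C) (f : Hom a a') :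
  zinv a' ∘ fmap G (fmap T f) = fmap T' (fmap G f) ∘ zinv a.
Proof. exact (naturality zinv a a' f). Qed.

Definition inverse_mate (b : C') : Hom (T (V b)) (V (T' b)) :=
  transpose adj (fmap T' (e b) ∘ zinv (V b)).

Lemma counit_inverse_mate (b : C') :
  e (T' b) ∘ fmap G (inverse_mate b) = fmap T' (e b) ∘ zinv (V b).
Proof. apply counit_transpose. Qed.

Lemma inverse_mate_natural (b b' : C') (f : Hom b b') :
  inverse_mate b' ∘ fmap T (fmap V f) = fmap V (fmap T' f) ∘ inverse_mate b.
Proof.
  apply (counit_comp_inj adj). rewrite !fmap_comp.
  arewrite counit_inverse_mate. arewrite (counit_natural adj).
  arewrite counit_inverse_mate. arewrite zinv_natural.
  arewrite (fmap_comp_eq T' (counit_natural adj _ _ f)). reflexivity.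
Qed.

Definition inverse_mate_nt : NatTrans (Fcomp T V) (Fcomp V T') :=
  Build_NatTrans (Fcomp T V) (Fcomp V T') inverse_mate inverse_mate_natural.

Hypothesis zeta_mult : forall a : C,
  zeta a ∘ mmu T' (G a) = fmap G (mmu T a) ∘ zeta (T a) ∘ fmap T' (zeta a).
Hypothesis zeta_unit : forall a : C,
  zeta a ∘ meta T' (G a) = fmap G (meta T a).

Lemma zinv_unit (a : C) : zinv a ∘ fmap G (meta T a) = meta T' (G a).
Proof. exact (inverse_comp_eq zinv_inverse (zeta_unit a)). Qed.

Lemma zinv_mult (a : C) :
  zinv a ∘ fmap G (mmu T a) = mmu T' (G a) ∘ fmap T' (zinv a) ∘ zinv (T a).
Proof.
  destruct zinv_inverse as [_ zeta_zinv].
  apply (inverse_comp_eq zinv_inverse).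
  arewrite zeta_mult. arewrite (comp_fmap T').
  arewrite zeta_zinv. rewrite fmap_id, comp_idl.
  arewrite zeta_zinv. apply comp_idr.
Qed.

Lemma inverse_mate_mult (b : C') :
  inverse_mate b ∘ mmu T (V b)
  = fmap V (mmu T' b) ∘ inverse_mate (T' b) ∘ fmap T (inverse_mate b).
Proof.
  apply (counit_comp_inj adj). rewrite !fmap_comp.
  arewrite (counit_natural adj). arewrite counit_inverse_mate.
  arewrite counit_inverse_mate. arewrite zinv_mult. arewrite zinv_natural.
  arewrite (fmap_comp_eq T' (counit_inverse_mate b)).
  arewrite <- (naturality (mmu T')). reflexivity.
Qed.

Lemma inverse_mate_unit (b : C') :
  inverse_mate b ∘ meta T (V b) = fmap V (meta T' b).
Proof.
  apply (counit_comp_inj adj). rewrite !fmap_comp.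
  arewrite (counit_natural adj). arewrite counit_inverse_mate.
  arewrite zinv_unit. arewrite <- (naturality (meta T')). reflexivity.
Qed.

Lemma inverse_mate_counit (b : C') :
  fmap T' (e b) = e (T' b) ∘ fmap G (inverse_mate b) ∘ zeta (V b).
Proof.
  destruct zinv_inverse as [zinv_zeta _].
  arewrite counit_inverse_mate. arewrite zinv_zeta. symmetry. apply comp_idr.
Qed.

Lemma inverse_mate_adj_unit (a : C) :
  h (T a) = fmap V (zeta a) ∘ inverse_mate (G a) ∘ fmap T (h a).
Proof.
  destruct zinv_inverse as [_ zeta_zinv].
  apply (counit_comp_inj adj). rewrite !fmap_comp.
  arewrite (adj_triangle1 adj). arewrite (counit_natural adj).
  arewrite counit_inverse_mate. arewrite zinv_natural.
  arewrite (comp_fmap T'). arewrite (adj_triangle1 adj).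
  rewrite fmap_id, comp_idl. symmetry. apply zeta_zinv.
Qed.

Lemma lifting_pair_inverse_mate : lifting_pair inverse_mate_nt.
Proof.
  split; [|split; [|split]].
  - exact inverse_mate_mult.
  - exact inverse_mate_unit.
  - exact inverse_mate_counit.
  - exact inverse_mate_adj_unit.
Qed.

Lemma lifting_unique (xi : NatTrans (Fcomp T V) (Fcomp V T'))
  (xi_counit : forall b : C', fmap T' (e b) = e (T' b) ∘ fmap G (xi b) ∘ zeta (V b))
  (b : C') : xi b = inverse_mate b.
Proof.
  destruct zinv_inverse as [_ zeta_zinv].
  apply (transpose_unique adj). rewrite xi_counit.
  arewrite zeta_zinv. rewrite comp_idr. reflexivity.
Qed.

End Mate.
End Lifting.

Theorem mainTheorem9
  (C C' : Category) (T : Monad C) (T' : Monad C')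
  (G : Functor C C') (V : Functor C' C) (adj : Adjunction G V)
  (zeta : NatTrans (Fcomp T' G) (Fcomp G T))
  (Hzmu : forall a : C,
      zeta a ∘ mmu T' (G a)
      = fmap G (mmu T a) ∘ zeta (T a) ∘ fmap T' (zeta a))
  (Hzeta : forall a : C, zeta a ∘ meta T' (G a) = fmap G (meta T a)) :
  let h := adj_unit adj in
  let e := adj_counit adj in
  let cond (xi : NatTrans (Fcomp T V) (Fcomp V T')) : Prop :=
    (forall b : C', xi b ∘ mmu T (V b)
                    = fmap V (mmu T' b) ∘ xi (T' b) ∘ fmap T (xi b)) /\
    (forall b : C', xi b ∘ meta T (V b) = fmap V (meta T' b)) /\
    (forall b : C', fmap T' (e b) = e (T' b) ∘ fmap G (xi b) ∘ zeta (V b)) /\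
    (forall a : C, h (T a) = fmap V (zeta a) ∘ xi (G a) ∘ fmap T (h a)) in
  ((exists xi : NatTrans (Fcomp T V) (Fcomp V T'), cond xi)
     <-> invertible_nt zeta) /\
  (forall (xi : NatTrans (Fcomp T V) (Fcomp V T'))
          (zinv : NatTrans (Fcomp G T) (Fcomp T' G)),
      cond xi -> is_inverse_nt zeta zinv ->
      forall b : C',
        xi b = fmap V (fmap T' (e b)) ∘ fmap V (zinv (V b)) ∘ h (T (V b))).
Proof.
  cbv zeta.
  split; [split|].
  - intros [xi (_ & _ & xi_counit & xi_unit)].
    exact (invertible_of_lifting _ _ _ _ _ xi_counit xi_unit).
  - intros [zinv zinv_inverse].
    exists (inverse_mate_nt T T' adj zinv).
    exact (lifting_pair_inverse_mate _ _ _ zinv_inverse Hzmu Hzeta).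
  - intros xi zinv (_ & _ & xi_counit & _) zinv_inverse b.
    rewrite (lifting_unique _ _ _ zinv_inverse xi xi_counit b).
    unfold inverse_mate, transpose. rewrite fmap_comp. reflexivity.
Qed.
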